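(* In the Standing Setup with $R=u(X^2-vX+w)$ ($u,v,w\in\mathbb F$), for every $h\in\mathbb Z$: $$(d_{h-1}d_h+u)(d_hd_{h+1}+u)=-u\,d_h\,(e_h^2+ve_h+w).$$
   Context: Standing Setup. $\mathbb F$ is a field of characteristic not $2$ or $3$; $f,g\in\mathbb F$; $A=X^3+fX+g\in\mathbb F[X]$; $R\in\mathbb F[X]$ is a polynomial of degree at most $2$; $D=A^2+4R$; $Y$ satisfies $Y^2=D(X)$, $Z=\tfrac12(Y+A)$ and $\overline Z=\tfrac12(-Y+A)$, so $Z+\overline Z=A$ and $Z\overline Z=-R$. We are given sequences $(u_h),(v_h),(w_h),(d_h),(e_h)$ of elements of $\mathbb F$ indexed by $h\in\mathbb Z$, with all $u_h\neq0$, such that for every $h\in\mathbb Z$ the following two identities hold in $\mathbb F[X]$: (i) $A+d_h(X+e_h)+d_{h+1}(X+e_{h+1})=(X+v_h)(X^2-v_hX+w_h)$; (ii) $-u_hu_{h+1}(X^2-v_hX+w_h)(X^2-v_{h+1}X+w_{h+1})=d_{h+1}^2(X+e_{h+1})^2+d_{h+1}(X+e_{h+1})A-R$. (These say that $Z_h=\bigl(Z+d_h(X+e_h)\bigr)/\bigl(u_h(X^2-v_hX+w_h)\bigr)$ are consecutive complete quotients of a continued fraction expansion with partial quotients $(X+v_h)/u_h$.) *)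

From mathcomp Require Import all_boot all_order all_algebra.
Set Implicit Arguments. Unset Strict Implicit. Unset Printing Implicit Defensive.
Import GRing.Theory.
Local Open Scope ring_scope.

Definition cubicA (F : fieldType) (f g : F) : {poly F} := 'X^3 + f *: 'X + g%:P.
Definition quadp (F : fieldType) (a b : F) : {poly F} := 'X^2 - a *: 'X + b%:P.
Definition linp (F : fieldType) (c : F) : {poly F} := 'X + c%:P.

(* Write P = u_(h-1) u_h, q_k = X^2 - v_k X + w_k and e = e_h.  Comparing the
   X^4, X^3 and X^2 coefficients of (ii) at h-1 gives d_h = -P, e = -(v_(h-1) + v_h)
   and an expression for u, while the X coefficients of (i) at h-1 and h give
   w_(h-1) and w_h.  With these, d_(h-1) d_h + u = P q_h(-e) and
   d_h d_(h+1) + u = P q_(h-1)(-e).  Evaluating (ii) at X = -e, where X + e vanishes,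
   gives P q_(h-1)(-e) q_h(-e) = u (e^2 + v e + w), and multiplying by -d_h = P
   yields the identity. *)
From mathcomp Require Import all_boot all_order all_algebra.
From mathcomp Require Import ring.
Set Implicit Arguments. Unset Strict Implicit. Unset Printing Implicit Defensive.
Import GRing.Theory.
Local Open Scope ring_scope.

Definition quartic (F : fieldType) (c0 c1 c2 c3 c4 : F) : {poly F} :=
  c0%:P + c1 *: 'X + c2 *: 'X^2 + c3 *: 'X^3 + c4 *: 'X^4.

Lemma quartic_eq0 (F : fieldType) (c0 c1 c2 c3 c4 : F) :
  quartic c0 c1 c2 c3 c4 = 0 -> [/\ c0 = 0, c1 = 0, c2 = 0, c3 = 0 & c4 = 0].
Proof.
move=> q0; have coef0q k : (quartic c0 c1 c2 c3 c4)`_k = 0 by rewrite q0 coef0.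
have := coef0q 0%N; have := coef0q 1%N; have := coef0q 2%N.
have := coef0q 3%N; have := coef0q 4%N.
rewrite /quartic !coefD !coefZ !coefXn !coefX !coefC /=.
by rewrite !(mulr0, mulr1, addr0, add0r) => -> -> -> -> ->.
Qed.

Lemma cubic_sum_coefX (F : fieldType) (f g d1 e1 d2 e2 v w : F) :
  cubicA f g + d1 *: linp e1 + d2 *: linp e2 = linp v * quadp v w ->
  w = f + d1 + d2 + v ^+ 2.
Proof.
move=> eq_i.
have : quartic (g + d1 * e1 + d2 * e2 - v * w) (f + d1 + d2 - w + v ^+ 2) 0 0 0 = 0.
  rewrite -(subrr (linp v * quadp v w)) -{1}eq_i /quartic /cubicA /linp /quadp.
  rewrite -!mul_polyC ?rmorphD ?rmorphM ?rmorphN ?rmorphB /=; ring.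
move/quartic_eq0 => [_ coefX _ _ _]; apply/eqP; rewrite -subr_eq0 -oppr_eq0 -coefX.
by apply/eqP; ring.
Qed.

Section QuarticIdentity.
Variables (F : fieldType) (f g P a b c b' d e u v w : F).
Hypothesis eq_ii : - P *: (quadp a b * quadp c b')
  = d ^+ 2 *: linp e ^+ 2 + d *: linp e * cubicA f g - u *: quadp v w.

Lemma quartic_identity_coefs :
  [/\ d = - P, P * (a + c) = d * e & u = P * (b' + a * c + b) + d ^+ 2 + d * f].
Proof.
have : quartic (- P * b * b' - d ^+ 2 * e ^+ 2 - d * e * g + u * w)
    (P * (a * b' + b * c) - 2%:R * d ^+ 2 * e - d * (e * f + g) - u * v)
    (- P * (b' + a * c + b) - d ^+ 2 - d * f + u) (P * (a + c) - d * e) (- P - d) = 0.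
  rewrite -(subrr (- P *: (quadp a b * quadp c b'))) {2}eq_ii.
  rewrite /quartic /cubicA /linp /quadp -!mul_polyC.
  rewrite ?rmorphD ?rmorphM ?rmorphN ?rmorphB ?rmorphXn /= ?rmorph_nat; ring.
move/quartic_eq0 => [_ _ coef2 coef3 coef4]; split; apply/eqP; rewrite -subr_eq0.
- by rewrite -oppr_eq0 -coef4; apply/eqP; ring.
- by rewrite -coef3.
- by rewrite -coef2; apply/eqP; ring.
Qed.

Lemma quartic_identity_at_root :
  P * (e ^+ 2 + a * e + b) * (e ^+ 2 + c * e + b') = u * (e ^+ 2 + v * e + w).
Proof.
have := congr1 (fun p => p.[- e]) eq_ii.
rewrite /= /cubicA /linp /quadp !(hornerE, hornerM) /= addNr => at_root.
transitivity (- (- P * ((- e) ^+ 2 - a * - e + b) * ((- e) ^+ 2 - c * - e + b')));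
  first by ring.
by rewrite at_root; ring.
Qed.

End QuarticIdentity.

Theorem mainTheorem6 (F : fieldType) (f g u v w : F)
    (us vs ws ds es : int -> F) :
  (2%:R : F) != 0 -> (3%:R : F) != 0 ->
  (forall h : int, us h != 0) ->
  (forall h : int,
     cubicA f g + ds h *: linp (es h) + ds (h + 1) *: linp (es (h + 1))
     = linp (vs h) * quadp (vs h) (ws h)) ->
  (forall h : int,
     - (us h * us (h + 1)) *: (quadp (vs h) (ws h) * quadp (vs (h + 1)) (ws (h + 1)))
     = ds (h + 1) ^+ 2 *: linp (es (h + 1)) ^+ 2
       + ds (h + 1) *: linp (es (h + 1)) * cubicA f g
       - u *: quadp v w) ->
  forall h : int,
    (ds (h - 1) * ds h + u) * (ds h * ds (h + 1) + u)
    = - u * ds h * (es h ^+ 2 + v * es h + w).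
Proof.
move=> _ _ us_neq0 eq_i eq_ii h.
have w_pred := cubic_sum_coefX (eq_i (h - 1)); rewrite subrK in w_pred.
have w_h := cubic_sum_coefX (eq_i h).
have eq_ii_pred := eq_ii (h - 1); rewrite subrK in eq_ii_pred.
set P := us (h - 1) * us h in eq_ii_pred.
have [d_h coef3 u_def] := quartic_identity_coefs eq_ii_pred.
have at_root := quartic_identity_at_root eq_ii_pred.
have e_h : es h = - (vs (h - 1) + vs h).
  have P_neq0 : P != 0 by rewrite mulf_neq0.
  by apply: (mulfI P_neq0); rewrite mulrN coef3 d_h; ring.
have left_factor : ds (h - 1) * ds h + u
    = P * (es h ^+ 2 + vs h * es h + ws h).
  by rewrite u_def w_pred w_h d_h e_h; ring.
have right_factor : ds h * ds (h + 1) + u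
    = P * (es h ^+ 2 + vs (h - 1) * es h + ws (h - 1)).
  by rewrite u_def w_pred w_h d_h e_h; ring.
rewrite left_factor right_factor d_h mulrNN (mulrC u) -(mulrA P u) -at_root; ring.
Qed.
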